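(* Let $\mathfrak{C}$ be a chromosome-set. A finite string $s$ is a multiplicity-extremal substring (MES) for $\mathfrak{C}$ if and only if there exist characters $c_1\neq c_2$ and $c_3\neq c_4$ such that $c_1s$, $c_2s$, $sc_3$ and $sc_4$ are all substrings of $\mathfrak{C}$.
   Context: All strings are over a fixed finite alphabet $\Sigma$. A cyclic string is a bi-infinite periodic word $\mathbb{Z}\to\Sigma$ up to shift, with least period $d$. A finite string is a substring of a cyclic string $c$ if it is a contiguous block of $c$; its number of occurrences in $c$ is the number of starting positions modulo $d$ at which it appears; a cyclic string is a substring only of itself. A chromosome-set is a (possibly infinite) set of cyclic strings; a string is a substring of it if it is a substring of one of its elements. A (finite or cyclic) string $s$ is a multiplicity-extremal substring (MES) for $\mathfrak{C}$ if $s$ is a substring of $\mathfrak{C}$ and every proper superstring $t$ of $s$ (a string $t\neq s$ containing $s$ as a substring) has, in at least one element of $\mathfrak{C}$, strictly fewer occurrences than $s$. *)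

From mathcomp Require Import all_boot.
Set Implicit Arguments. Unset Strict Implicit. Unset Printing Implicit Defensive.

Section Strings.
Variable T : finType.

(* A cyclic string is represented by a nonempty word w: it denotes the
   bi-infinite periodic word  i |-> w_(i mod |w|).  Different representatives
   (rotations, powers) denote the same cyclic string; all notions below are
   invariant under this. *)
Definition cyc := {w : seq T | 0 < size w}.

(* letter at position i (i : nat; the word is periodic so nat positions suffice) *)
Definition cletter (w : seq T) (i : nat) : option T := onth w (i %% size w).

Definition period (w : seq T) : nat :=
  head (size w) [seq d <- iota 1 (size w) | rot d w == w].

Definition matches_at (w s : seq T) (p : nat) : bool :=
  all (fun j => cletter w (p + j) == onth s j) (iota 0 (size s)).

(* the cyclic string t appears at position p of the cyclic word w, i.e. the
   bi-infinite word of w shifted by p equals that of t (checking size w * size t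
   positions suffices by periodicity) *)
Definition cmatches_at (w t : seq T) (p : nat) : bool :=
  all (fun i => cletter w (p + i) == cletter t i) (iota 0 (size w * size t)).

Inductive str := Fin of seq T | Cyc of cyc.

Definition occ (t : str) (c : cyc) : nat :=
  match t with
  | Fin s => count (matches_at (val c) s) (iota 0 (period (val c)))
  | Cyc u => count (cmatches_at (val c) (val u)) (iota 0 (period (val c)))
  end.

Definition substr_cyc (t : str) (c : cyc) : Prop :=
  match t with
  | Fin s => exists p, matches_at (val c) s p
  | Cyc u => exists p, cmatches_at (val c) (val u) p
  end.

Definition chromset := cyc -> Prop.

Definition substr_set (t : str) (C : chromset) : Prop :=
  exists c, C c /\ substr_cyc t c.

Definition proper_super (s t : str) : Prop :=
  match s, t with
  | Fin s, Fin t => t != s /\ infix s t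
  | Fin s, Cyc u => substr_cyc (Fin s) u
  | Cyc _, _ => False
  end.

Definition MES (s : str) (C : chromset) : Prop :=
  substr_set s C /\
  forall t, proper_super s t -> exists c, C c /\ occ t c < occ s c.

End Strings.

(* If all occurrences of [s] in a chromosome are preceded by the same letter [a], then [a s]
   occurs there exactly as often as [s]; hence a MES has two distinct left and two distinct
   right one-letter extensions.  Conversely, a proper finite superstring of [s] contains some
   [a s] (or [s a]), and [a s] occurs strictly less often than [s] in any chromosome containing
   [b s] with [b != a].  A cyclic string [u] occurs at most once per least period; if it occurs
   in both chromosomes containing [c1 s] and [c2 s], these are the cyclic string [u] itself, so
   [s] occurs twice in it; otherwise a chromosome missing [u] is the witness. *)

From mathcomp Require Import all_boot zify.
From Stdlib Require Import Classical_Prop.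
Set Implicit Arguments. Unset Strict Implicit. Unset Printing Implicit Defensive.

Lemma count_iota_periodic (P : pred nat) d k : (forall x, P (x + d) = P x) ->
  count P (iota k d) = count P (iota 0 d).
Proof.
move=> P_per; elim: k => [//|k <-].
have /(congr1 (count P)) : iota k d ++ iota (k + d) 1 = k :: iota k.+1 d.
  by rewrite -iotaD addn1.
by rewrite count_cat /= P_per addn0 addnC => /addnI.
Qed.

Section Counting.
Variable A : eqType.

Lemma count_lt (P Q : pred A) l x : subpred P Q -> x \in l -> Q x -> ~~ P x ->
  count P l < count Q l.
Proof.
move=> sPQ; elim: l => [//|y l IHl] /=; rewrite inE => /predU1P[<-|x_l] Qx nPx.
  by rewrite Qx (negbTE nPx) add0n add1n ltnS sub_count.
by rewrite -addnS leq_add ?IHl //; case Py: (P y); rewrite // (sPQ _ Py).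
Qed.

Lemma count_ge2 (P : pred A) l x y : uniq l -> x \in l -> y \in l -> x != y ->
  P x -> P y -> 1 < count P l.
Proof.
move=> l_uniq x_l y_l neq_xy Px Py; rewrite -size_filter.
apply: (@uniq_leq_size _ [:: x; y]); first by rewrite /= inE neq_xy.
by move=> z; rewrite !inE mem_filter => /orP[]/eqP->; rewrite ?Px ?Py ?x_l ?y_l.
Qed.

Lemma count_le1 (P : pred A) l : uniq l ->
  {in l &, forall x y, P x -> P y -> x = y} -> count P l <= 1.
Proof.
elim: l => [//|x l IHl] /= /andP[x_l l_uniq] P_inj.
have P_inj_l : {in l &, forall x y, P x -> P y -> x = y}.
  by move=> y z y_l z_l; apply: P_inj; rewrite inE ?y_l ?z_l orbT.
case Px: (P x); last exact: IHl.
suff -> : count P l = 0 by [].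
apply/eqP; rewrite -leqn0 leqNgt -has_count; apply/hasPn => y y_l.
by apply: contraNN x_l => Py; rewrite (P_inj x y) ?mem_head ?inE ?y_l ?orbT.
Qed.

End Counting.

Section Words.
Variable T : finType.
Implicit Types (w s t : seq T) (c u : cyc T).

Lemma cyc_size_gt0 c : 0 < size (val c).
Proof. by case: c. Qed.
Local Hint Resolve cyc_size_gt0 : core.

Lemma cletter_nth x0 w i : 0 < size w ->
  cletter w i = Some (nth x0 w (i %% size w)).
Proof. by move=> w_gt0; rewrite /cletter onthE (nth_map x0) // ltn_pmod. Qed.

Lemma cletterDM w i k : cletter w (i + k * size w) = cletter w i.
Proof. by rewrite /cletter addnC modnMDl. Qed.

Lemma cletter_exists w i : 0 < size w -> exists a, cletter w i = Some a.
Proof. by case: w => [//|x0 w] w_gt0; eexists; apply: (cletter_nth x0). Qed.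

Lemma nth_rot x0 w k i : k <= size w -> i < size w ->
  nth x0 (rot k w) i = nth x0 w ((i + k) %% size w).
Proof.
move=> le_kw lt_iw; rewrite /rot nth_cat size_drop.
case: ifP => lt_i.
  by rewrite nth_drop modn_small; [congr nth; lia | lia].
rewrite nth_take; last by lia.
have -> : i + k = i - (size w - k) + size w by lia.
by rewrite modnDr modn_small //; lia.
Qed.

Definition shift_invariant w k := forall i, cletter w (i + k) = cletter w i.

Lemma shift_invariant_size w : shift_invariant w (size w).
Proof. by move=> i; rewrite -[size w]mul1n cletterDM. Qed.

Lemma shift_invariantM w k m : shift_invariant w k -> shift_invariant w (m * k).
Proof.
by move=> wk; elim: m => [|m IHm] i; rewrite ?addn0 // mulSn addnA IHm wk.
Qed.

Lemma rot_eq_shift_invariant w k : 0 < size w -> k <= size w ->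
  rot k w = w <-> shift_invariant w k.
Proof.
move=> w_gt0 le_kw; have x0 : T by case: w w_gt0 {le_kw} => // x0.
split=> [rot_w i | wk].
  rewrite !(cletter_nth x0) // -modnDml -(nth_rot x0 le_kw) ?ltn_pmod //.
  by rewrite rot_w.
apply: (@eq_from_nth _ x0) => [|i]; rewrite size_rot // => lt_iw.
have := wk i; rewrite !(cletter_nth x0) // => -[eq_nth].
by rewrite nth_rot // eq_nth modn_small.
Qed.

Lemma period_spec w : 0 < size w ->
  [/\ 0 < period w, period w <= size w & rot (period w) w = w].
Proof.
move=> w_gt0; rewrite /period.
case def_ds: [seq d <- iota 1 (size w) | rot d w == w] => [|d ds] /=.
  by rewrite rot_size.
have : d \in [seq d <- iota 1 (size w) | rot d w == w] by rewrite def_ds mem_head.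
by rewrite mem_filter mem_iota => /andP[/eqP-> ?]; split=> //; lia.
Qed.

Lemma period_gt0 w : 0 < size w -> 0 < period w.
Proof. by case/period_spec. Qed.

Lemma period_min w k : 0 < k -> k <= size w -> rot k w = w -> period w <= k.
Proof.
move=> k_gt0 le_kw rot_w; rewrite /period.
have : k \in [seq d <- iota 1 (size w) | rot d w == w].
  by rewrite mem_filter rot_w eqxx mem_iota; lia.
have : sorted leq [seq d <- iota 1 (size w) | rot d w == w].
  by apply: sorted_filter; [exact: leq_trans | exact: iota_sorted].
case: [seq _ <- _ | _] => [//|d ds] /= ds_sorted.
rewrite inE => /predU1P[-> //|k_ds].
by move/allP: (order_path_min leq_trans ds_sorted) => /(_ k k_ds).
Qed.

Lemma shift_invariant_period w m : 0 < size w -> shift_invariant w (m * period w).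
Proof.
move=> w_gt0; have [_ le_pw rot_w] := period_spec w_gt0.
exact/shift_invariantM/rot_eq_shift_invariant.
Qed.

Lemma period_dvd w k : 0 < size w -> shift_invariant w k -> period w %| k.
Proof.
move=> w_gt0 wk; have [p_gt0 le_pw _] := period_spec w_gt0.
have w_mod : shift_invariant w (k %% period w).
  move=> i; rewrite -[RHS]wk [in RHS](divn_eq k (period w)).
  by rewrite (addnC (_ * _)) addnA shift_invariant_period.
rewrite /dvdn; apply: contraT; rewrite -lt0n => mod_gt0.
have lt_mod : k %% period w < period w by rewrite ltn_pmod.
have le_mod : k %% period w <= size w := leq_trans (ltnW lt_mod) le_pw.
have := period_min mod_gt0 le_mod (proj2 (rot_eq_shift_invariant w_gt0 le_mod) w_mod).
by rewrite leqNgt lt_mod.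
Qed.

Lemma shift_invariant_diff w x y : 0 < size w -> x <= y ->
  (forall j, cletter w (x + j) = cletter w (y + j)) -> shift_invariant w (y - x).
Proof.
move=> w_gt0 le_xy xy_eq i; set j := i + x * size w - x.
have le_x : x <= i + x * size w := leq_trans (leq_pmulr x w_gt0) (leq_addl _ _).
rewrite -(cletterDM w i x) -(cletterDM w (i + (y - x)) x).
have -> : i + x * size w = x + j by rewrite /j; lia.
have -> : i + (y - x) + x * size w = y + j by rewrite /j; lia.
by rewrite xy_eq.
Qed.

Lemma matches_atP w s p :
  reflect (forall j, j < size s -> cletter w (p + j) = onth s j) (matches_at w s p).
Proof.
apply: (iffP allP) => [m_s j lt_js|m_s j]; last by rewrite mem_iota => /andP[_ /m_s->].
by apply/eqP/m_s; rewrite mem_iota.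
Qed.

Lemma matches_at1 w a p : matches_at w [:: a] p = (cletter w p == Some a).
Proof. by rewrite /matches_at /= addn0 andbT. Qed.

Lemma matches_at_cat w s t p :
  matches_at w (s ++ t) p = matches_at w s p && matches_at w t (p + size s).
Proof.
rewrite /matches_at size_cat iotaD all_cat add0n; congr andb.
  by apply: eq_in_all => j; rewrite mem_iota onth_cat => /andP[_ ->].
rewrite -[size s]addn0 iotaDl all_map addn0; apply: eq_all => j /=.
by rewrite onth_cat ltnNge leq_addr addKn addnA.
Qed.

Lemma matches_at_cons w a s p :
  matches_at w (a :: s) p = (cletter w p == Some a) && matches_at w s p.+1.
Proof. by rewrite -cat1s matches_at_cat matches_at1 addn1. Qed.

Lemma matches_at_rcons w s a p :
  matches_at w (rcons s a) p = matches_at w s p && (cletter w (p + size s) == Some a).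
Proof. by rewrite -cats1 matches_at_cat matches_at1. Qed.

Lemma matches_at_shift_invariant w s k p : shift_invariant w k ->
  matches_at w s (p + k) = matches_at w s p.
Proof. by move=> wk; apply: eq_all => j; rewrite addnAC wk. Qed.

Lemma matches_at_mod w s p : 0 < size w ->
  matches_at w s (p %% period w) = matches_at w s p.
Proof.
move=> w_gt0; rewrite [in RHS](divn_eq p (period w)) addnC.
by rewrite matches_at_shift_invariant //; apply: shift_invariant_period.
Qed.

Lemma occ_Fin_shift s c k :
  occ (Fin s) c = count (fun x => matches_at (val c) s (x + k)) (iota 0 (period (val c))).
Proof.
rewrite /occ -(@count_iota_periodic _ _ k); last first.
  move=> x; rewrite -[period _]mul1n matches_at_shift_invariant //.
  exact: shift_invariant_period.
rewrite -{1}(addn0 k) iotaDl count_map.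
by apply: eq_count => x; rewrite /= addnC.
Qed.

Lemma occ_Fin_gt0 s c p : matches_at (val c) s p -> 0 < occ (Fin s) c.
Proof.
move=> m_s; rewrite /occ -has_count; apply/hasP; exists (p %% period (val c)).
  by rewrite mem_iota ltn_pmod // period_gt0.
by rewrite matches_at_mod.
Qed.

Lemma occ_Fin_infix s t c : infix s t -> occ (Fin t) c <= occ (Fin s) c.
Proof.
case/infixP=> t1 [t2 ->]; rewrite (occ_Fin_shift s c (size t1)).
by apply: sub_count => x; rewrite /= !matches_at_cat => /andP[_ /andP[]].
Qed.

Lemma occ_Fin_cons_ge s a c : (forall b x, matches_at (val c) (b :: s) x -> b = a) ->
  occ (Fin s) c <= occ (Fin (a :: s)) c.
Proof.
move=> left_a; rewrite (occ_Fin_shift s c 1); apply: sub_count => x /=.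
rewrite addn1 => m_s; have [b w_x] := cletter_exists x (cyc_size_gt0 c).
by rewrite -(left_a b x) matches_at_cons w_x eqxx.
Qed.

Lemma occ_Fin_rcons_ge s a c : (forall b x, matches_at (val c) (rcons s b) x -> b = a) ->
  occ (Fin s) c <= occ (Fin (rcons s a)) c.
Proof.
move=> right_a; apply: sub_count => x /= m_s.
have [b w_x] := cletter_exists (x + size s) (cyc_size_gt0 c).
by rewrite -(right_a b x) matches_at_rcons w_x m_s eqxx.
Qed.

Lemma occ_Fin_cons_lt s a b c r : a != b -> matches_at (val c) (b :: s) r ->
  occ (Fin (a :: s)) c < occ (Fin s) c.
Proof.
rewrite -matches_at_mod // matches_at_cons => neq_ab /andP[/eqP w_r m_s].
rewrite (occ_Fin_shift s c 1); apply: (count_lt (x := r %% period (val c))).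
- by move=> x; rewrite /= matches_at_cons addn1 => /andP[].
- by rewrite mem_iota ltn_pmod // period_gt0.
- by rewrite /= addn1.
- by rewrite matches_at_cons w_r (inj_eq Some_inj) eq_sym (negbTE neq_ab).
Qed.

Lemma occ_Fin_rcons_lt s a b c r : a != b -> matches_at (val c) (rcons s b) r ->
  occ (Fin (rcons s a)) c < occ (Fin s) c.
Proof.
rewrite -matches_at_mod // matches_at_rcons => neq_ab /andP[m_s /eqP w_r].
apply: (count_lt (x := r %% period (val c))).
- by move=> x; rewrite /= matches_at_rcons => /andP[].
- by rewrite mem_iota ltn_pmod // period_gt0.
- by [].
- by rewrite /= matches_at_rcons w_r (inj_eq Some_inj) eq_sym (negbTE neq_ab) andbF.
Qed.

Lemma occ_Fin_gt1 s a b c x y : a != b ->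
  matches_at (val c) (a :: s) x -> matches_at (val c) (b :: s) y -> 1 < occ (Fin s) c.
Proof.
move=> neq_ab; rewrite -(matches_at_mod (a :: s)) // -(matches_at_mod (b :: s)) //.
rewrite !matches_at_cons => /andP[/eqP w_x m_x] /andP[/eqP w_y m_y].
have p_gt0 := period_gt0 (cyc_size_gt0 c).
rewrite (occ_Fin_shift s c 1).
apply: (count_ge2 (x := x %% period (val c)) (y := y %% period (val c))).
- exact: iota_uniq.
- by rewrite mem_iota ltn_pmod.
- by rewrite mem_iota ltn_pmod.
- by apply: contra neq_ab => /eqP eq_xy; move: w_x; rewrite eq_xy w_y => -[->].
- by rewrite /= addn1.
- by rewrite /= addn1.
Qed.

Lemma cmatches_at_cletter w t p : 0 < size w -> 0 < size t -> cmatches_at w t p ->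
  forall i, cletter w (p + i) = cletter t i.
Proof.
move=> w_gt0 t_gt0 /allP m_wt i.
have wt_gt0 : 0 < size w * size t by rewrite muln_gt0 w_gt0.
rewrite (divn_eq i (size w * size t)); set q := i %/ _; set r := i %% _.
have -> : q * (size w * size t) + r = r + q * size w * size t by rewrite mulnA addnC.
have -> : p + (r + q * size w * size t) = p + r + q * size t * size w.
  by rewrite mulnAC addnA.
by rewrite !cletterDM; apply/eqP/m_wt; rewrite mem_iota ltn_pmod.
Qed.

Lemma occ_Cyc_gt0 u c : 0 < occ (Cyc u) c -> exists p, cmatches_at (val c) (val u) p.
Proof. by rewrite /occ -has_count => /hasP[p _]; exists p. Qed.

Lemma occ_Cyc_le1 u c : occ (Cyc u) c <= 1.
Proof.
rewrite /occ; apply: count_le1 (iota_uniq _ _) _ => x y.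
wlog le_xy : x y / x <= y => [hwlog|].
  by case: (leqP x y) => [|/ltnW] le; [apply: hwlog | move=> *; apply/esym/hwlog].
rewrite !mem_iota => _ /andP[_ lt_y] m_x m_y.
have w_inv : shift_invariant (val c) (y - x).
  apply: shift_invariant_diff => // j.
  by rewrite (cmatches_at_cletter _ _ m_x) // (cmatches_at_cletter _ _ m_y).
have := period_dvd (cyc_size_gt0 c) w_inv; rewrite /dvdn modn_small; lia.
Qed.

Lemma matches_at_transfer u c c' p p' s r' :
  cmatches_at (val c) (val u) p -> cmatches_at (val c') (val u) p' ->
  matches_at (val c') s r' -> exists r, matches_at (val c) s r.
Proof.
move=> u_c u_c' /matches_atP m_s; set W' := size (val c').
exists (p + (r' + p' * W' - p')); apply/matches_atP => j lt_js.
have le_p' : p' <= r' + p' * W' := leq_trans (leq_pmulr _ (cyc_size_gt0 c')) (leq_addl _ _).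
rewrite -addnA (cmatches_at_cletter _ _ u_c) // -(cmatches_at_cletter _ _ u_c') //.
have -> : p' + (r' + p' * W' - p' + j) = r' + j + p' * W' by lia.
by rewrite cletterDM m_s.
Qed.

Lemma exists_matches_at_cons w s p : 0 < size w -> matches_at w s p ->
  exists a q, matches_at w (a :: s) q.
Proof.
move=> w_gt0 m_s; have [a w_a] := cletter_exists (p + size w).-1 w_gt0.
exists a, (p + size w).-1; rewrite matches_at_cons w_a eqxx prednK; last first.
  by rewrite addn_gt0 w_gt0 orbT.
by rewrite matches_at_shift_invariant //; apply: shift_invariant_size.
Qed.

Lemma exists_matches_at_rcons w s p : 0 < size w -> matches_at w s p ->
  exists a, matches_at w (rcons s a) p.
Proof.
move=> w_gt0 m_s; have [a w_a] := cletter_exists (p + size s) w_gt0.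
by exists a; rewrite matches_at_rcons m_s w_a eqxx.
Qed.

Lemma infix_proper_ext s t : t != s -> infix s t ->
  (exists a, infix (a :: s) t) \/ (exists a, infix (rcons s a) t).
Proof.
move=> neq_ts /infixP[t1 [t2 def_t]].
case/lastP: t1 def_t => [|t1 a] def_t.
  case: t2 def_t => [|a t2] def_t; first by rewrite def_t cats0 eqxx in neq_ts.
  by right; exists a; apply/infixP; exists [::], t2; rewrite def_t cat_rcons.
by left; exists a; apply/infixP; exists t1, t2; rewrite def_t cat_rcons.
Qed.

Section Branching.
Variables (C : chromset T) (s : seq T) (ext : T -> seq T).

Lemma MES_two_extensions :
  MES (Fin s) C ->
  (forall a, proper_super (Fin s) (Fin (ext a))) ->
  (forall a c, (forall b x, matches_at (val c) (ext b) x -> b = a) ->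
     occ (Fin s) c <= occ (Fin (ext a)) c) ->
  (exists a, substr_set (Fin (ext a)) C) ->
  exists a b, a != b /\ substr_set (Fin (ext a)) C /\ substr_set (Fin (ext b)) C.
Proof.
move=> [_ s_MES] ext_proper occ_ext [a ext_a]; apply: NNPP => no_pair.
have [c [Cc]] := s_MES _ (ext_proper a); apply/negP; rewrite -leqNgt.
apply: occ_ext => b x m_b; apply/eqP; apply: contraT => neq_ba.
by case: no_pair; exists b, a; do !split=> //; exists c; split=> //; exists x.
Qed.

Lemma two_extensions_occ_lt t a b1 b2 :
  (forall a b c r, a != b -> matches_at (val c) (ext b) r ->
     occ (Fin (ext a)) c < occ (Fin s) c) ->
  b1 != b2 -> substr_set (Fin (ext b1)) C -> substr_set (Fin (ext b2)) C ->
  infix (ext a) t -> exists c, C c /\ occ (Fin t) c < occ (Fin s) c.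
Proof.
move=> occ_lt neq_b12 ext_b1 ext_b2 ext_t.
have [b neq_ab [c [Cc [r m_b]]]] : exists2 b, a != b & substr_set (Fin (ext b)) C.
  by case: (eqVneq a b1) => [->|]; [exists b2 | exists b1].
exists c; split=> //.
exact: leq_ltn_trans (occ_Fin_infix c ext_t) (occ_lt _ _ _ _ neq_ab m_b).
Qed.

End Branching.

Lemma MES_two_left_extensions C s : MES (Fin s) C ->
  exists a b, a != b /\ substr_set (Fin (a :: s)) C /\ substr_set (Fin (b :: s)) C.
Proof.
move=> s_MES.
apply: (@MES_two_extensions C s (cons^~ s) s_MES _ (@occ_Fin_cons_ge s)) => [a|].
  by split; [apply/eqP => /(congr1 size) /=; lia | exact: infix_cons].
have [[c [Cc [p m_s]]] _] := s_MES.
have [a [q m_as]] := exists_matches_at_cons (cyc_size_gt0 c) m_s.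
by exists a, c; split=> //; exists q.
Qed.

Lemma MES_two_right_extensions C s : MES (Fin s) C ->
  exists a b, a != b /\ substr_set (Fin (rcons s a)) C /\ substr_set (Fin (rcons s b)) C.
Proof.
move=> s_MES.
apply: (@MES_two_extensions C s (rcons s) s_MES _ (@occ_Fin_rcons_ge s)) => [a|].
  by split; [apply/eqP => /(congr1 size); rewrite size_rcons; lia | exact: infix_rcons].
have [[c [Cc [p m_s]]] _] := s_MES.
have [a m_sa] := exists_matches_at_rcons (cyc_size_gt0 c) m_s.
by exists a, c; split=> //; exists p.
Qed.

Lemma two_left_extensions_occ_Cyc_lt C s u b1 b2 : b1 != b2 ->
  substr_set (Fin (b1 :: s)) C -> substr_set (Fin (b2 :: s)) C ->
  exists c, C c /\ occ (Cyc u) c < occ (Fin s) c.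
Proof.
move=> neq_b12 [c [Cc [r m_b1]]] [c' [Cc' [r' m_b2]]].
have s_c : 0 < occ (Fin s) c.
  exact: leq_trans (occ_Fin_gt0 m_b1) (occ_Fin_infix c (infix_cons s b1)).
have s_c' : 0 < occ (Fin s) c'.
  exact: leq_trans (occ_Fin_gt0 m_b2) (occ_Fin_infix c' (infix_cons s b2)).
have [u_c0|/occ_Cyc_gt0[p u_c]] := posnP (occ (Cyc u) c).
  by exists c; rewrite u_c0.
have [u_c'0|/occ_Cyc_gt0[p' u_c']] := posnP (occ (Cyc u) c').
  by exists c'; rewrite u_c'0.
have [q m_b2c] := matches_at_transfer u_c u_c' m_b2.
exists c; split=> //.
exact: leq_ltn_trans (occ_Cyc_le1 u c) (occ_Fin_gt1 neq_b12 m_b1 m_b2c).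
Qed.

End Words.

Theorem theorem9 (T : finType) (C : chromset T) (s : seq T) :
  MES (Fin s) C <->
  exists c1 c2 c3 c4 : T,
    c1 != c2 /\ c3 != c4 /\
    substr_set (Fin (c1 :: s)) C /\ substr_set (Fin (c2 :: s)) C /\
    substr_set (Fin (rcons s c3)) C /\ substr_set (Fin (rcons s c4)) C.
Proof.
split=> [s_MES | [c1 [c2 [c3 [c4 [neq12 [neq34 [c1_s [c2_s [s_c3 s_c4]]]]]]]]]].
  have [c1 [c2 [neq12 [c1_s c2_s]]]] := MES_two_left_extensions s_MES.
  have [c3 [c4 [neq34 [s_c3 s_c4]]]] := MES_two_right_extensions s_MES.
  by exists c1, c2, c3, c4.
split.
  have [c [Cc [r m_c1s]]] := c1_s; exists c; split=> //; exists r.+1.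
  by move: m_c1s; rewrite matches_at_cons => /andP[].
case=> [t [neq_ts s_t] | u _].
  case: (infix_proper_ext neq_ts s_t) => -[a ext_t].
    exact: two_extensions_occ_lt (@occ_Fin_cons_lt T s) neq12 c1_s c2_s ext_t.
  exact: two_extensions_occ_lt (@occ_Fin_rcons_lt T s) neq34 s_c3 s_c4 ext_t.
exact: two_left_extensions_occ_Cyc_lt neq12 c1_s c2_s.
Qed.
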